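(* Assume $K$ is a field and $\tau_{(i)}\neq0$, $\eta_{(i)}\neq0$ for all $i\in\Omega$. Then $\mathbf{P}$ is hierarchical if and only if for all $B,D\in\mathcal{I}(\overline{\mathbf{P}})$, $|B|=|D|$ implies $\deg(\pi(\Omega,B))=\deg(\pi(\Omega,D))$.
   Context: $\Omega$ is a finite set and $\mathbf{P}=(\Omega,\preccurlyeq_{\mathbf{P}})$ a poset; $\overline{\mathbf{P}}$ is the dual poset and $\mathcal{I}(\overline{\mathbf{P}})$ its set of ideals (up-closed subsets of $\mathbf{P}$). For $Y\subseteq\Omega$: $\max(Y)$ is the set of maximal elements of $Y$ w.r.t. $\preccurlyeq_{\mathbf{P}}$; $\mathcal{I}(Y)$ is the set of down-closed subsets of $Y$. $\tau,\eta\in K^{\Omega}$. For $D,I\subseteq\Omega$, $\varphi(D,I)=(-1)^{|I\cap D|}\big(\prod_{i\in I-\max(I)}\tau_{(i)}\big)\big(\prod_{i\in\max(I)-D}\eta_{(i)}\big)$ if $I\cap D\subseteq\max(I)$, and $0$ otherwise; for $D\subseteq Y\subseteq\Omega$, $\pi(Y,D)=\sum_{I\in\mathcal{I}(Y)}\varphi(D,I)x^{|I|}\in K[x]$. $\mathrm{len}(y)$ is the largest cardinality of a chain in $\mathbf{P}$ with greatest element $y$; $\mathbf{P}$ is hierarchical if $\mathrm{len}(u)+1\leqslant\mathrm{len}(v)$ implies $u\preccurlyeq_{\mathbf{P}}v$. *)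

From HB Require Import structures.
From mathcomp Require Import all_boot all_order all_algebra.
Set Implicit Arguments. Unset Strict Implicit. Unset Printing Implicit Defensive.
Import Order.TTheory GRing.Theory.
Local Open Scope order_scope.

Section PosetPoly.
Variables (d : Order.disp_t) (T : finPOrderType d).

Definition maxset_of (Y : {set T}) : {set T} :=
  [set y in Y | [forall z in Y, (y <= z) ==> (z == y)]].

Definition downclosed_in (Y I : {set T}) : bool :=
  (I \subset Y) && [forall x in I, forall y in Y, (y <= x) ==> (y \in I)].

(* ideals of the dual poset: up-closed subsets of Omega *)
Definition upclosed (B : {set T}) : bool :=
  [forall x in B, forall y, (x <= y) ==> (y \in B)].

Definition is_chain (C : {set T}) : bool :=
  [forall x in C, forall y in C, (x <= y) || (y <= x)].

Definition len (y : T) : nat :=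
  \max_(C : {set T} | is_chain C && (y \in C) && [forall c in C, c <= y]) #|C|.

Definition hierarchical : Prop :=
  forall u v : T, (len u + 1 <= len v)%N -> u <= v.

Local Open Scope ring_scope.
Variables (K : fieldType) (tau eta : T -> K).

Definition phi (D I : {set T}) : K :=
  if (I :&: D) \subset maxset_of I then
    (-1) ^+ #|I :&: D| * (\prod_(i in I :\: maxset_of I) tau i)
      * (\prod_(i in maxset_of I :\: D) eta i)
  else 0.

Definition pi_poly (Y D : {set T}) : {poly K} :=
  \sum_(I : {set T} | downclosed_in Y I) (phi D I) *: 'X^#|I|.

End PosetPoly.

(* degree of a polynomial (pi_poly is never 0: its constant term is 1) *)
Definition deg (K : fieldType) (p : {poly K}) : nat := (size p).-1.

(* The leading term of [pi_poly tau eta setT D] comes from the down-set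
   [~: D :|: minimals D], the largest down-set [I] with [phi D I != 0], so its
   degree is [#|~: D| + #|minimals D|]: the theorem says that P is hierarchical
   iff the number of minimal elements of an up-set depends only on its size.
   In a hierarchical poset an up-set whose lowest level is [l] contains every
   level above [l], and its minimal elements are its elements of level [l].
   Conversely, adding to an up-set [D] an element [x] whose strict upper bounds
   all lie in [D] changes the number of minimal elements by one minus the number
   of minimal elements of [D] above [x]; at the highest level where P fails to be
   hierarchical, two such additions to the same [D] make these numbers differ. *)

From HB Require Import structures.
From mathcomp Require Import all_boot all_order all_algebra zify.
Set Implicit Arguments. Unset Strict Implicit. Unset Printing Implicit Defensive.
Import Order.TTheory GRing.Theory.

Section Length.
Variables (d : Order.disp_t) (T : finPOrderType d).
Local Open Scope order_scope.
Implicit Types (x y u v w : T) (C : {set T}).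

Definition chain_with_top y C := is_chain C && (y \in C) && [forall c in C, c <= y].

Lemma chain_with_top1 y : chain_with_top y [set y].
Proof.
rewrite /chain_with_top /is_chain set11 andbT; apply/andP; split.
  by apply/forall_inP=> x /set1P->; apply/forall_inP=> z /set1P->; rewrite lexx.
by apply/forall_inP=> x /set1P->.
Qed.

Lemma len_witness y : exists2 C, chain_with_top y C & #|C| = len y.
Proof.
have ne : (0 < #|[pred C | chain_with_top y C]|)%N.
  by apply/card_gt0P; exists [set y]; rewrite inE chain_with_top1.
have [C yC maxC] := eq_bigmax_cond (fun C : {set T} => #|C|) ne.
by exists C; rewrite ?inE // -maxC; apply: eq_bigl => C'; rewrite inE.
Qed.

Lemma len_gt0 y : (0 < len y)%N.
Proof. by rewrite -(cards1 y); apply: leq_bigmax_cond; apply: chain_with_top1. Qed.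

Lemma ltn_len x y : x < y -> (len x < len y)%N.
Proof.
move=> xy; have [C /andP[/andP[/forall_inP chC xC] /forall_inP belowx] <-] := len_witness x.
have below_y c : c \in C -> c <= y by move=> /belowx cx; exact: le_trans cx (ltW xy).
have yC : y \notin C by apply/negP=> /belowx; rewrite (lt_geF xy).
have -> : #|C|.+1 = #|y |: C| by rewrite cardsU1 yC.
apply: leq_bigmax_cond.
rewrite /chain_with_top setU11 andbT; apply/andP; split.
  apply/forall_inP=> a /setU1P[->|aC]; apply/forall_inP=> b /setU1P[->|bC].
  - by rewrite lexx.
  - by rewrite below_y ?orbT.
  - by rewrite below_y.
  - exact: (forall_inP (chC a aC)).
by apply/forall_inP=> a /setU1P[->|/below_y].
Qed.

Lemma leq_len x y : x <= y -> (len x <= len y)%N.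
Proof. by rewrite le_eqVlt => /orP[/eqP->//|/ltn_len/ltnW]. Qed.

(* The element of [C :\ v] of largest length is the top of that chain. *)
Lemma len_pred v : (1 < len v)%N -> exists2 w, w < v & len w = (len v).-1.
Proof.
move=> lv2; have [C /andP[/andP[/forall_inP chC vC] /forall_inP belowv] cardC] := len_witness v.
have cardC' : #|C :\ v| = (len v).-1 by rewrite -cardC (cardsD1 v C) vC.
have [w0 w0C] : exists w0, w0 \in C :\ v.
  by apply/set0Pn; rewrite -card_gt0 cardC'; case: (len v) lv2 => [|[]].
have [w /setD1P[wv wC] wmax] := arg_maxnP (fun w => len w) w0C.
have wltv : w < v by rewrite lt_def eq_sym wv belowv.
exists w => //; apply/eqP; rewrite eqn_leq; apply/andP; split.
  by have := ltn_len wltv; case: (len v).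
rewrite -cardC'; apply: leq_bigmax_cond.
rewrite /chain_with_top !inE wv wC !andbT; apply/andP; split.
  apply/forall_inP=> a /setD1P[_ aC]; apply/forall_inP=> b /setD1P[_ bC].
  exact: (forall_inP (chC a aC)).
apply/forall_inP=> c cC'; have /setD1P[_ cC] := cC'.
have /orP[//|wc] := forall_inP (chC c cC) w wC.
move: wc; rewrite le_eqVlt => /orP[/eqP->//|/ltn_len].
by move=> /leq_trans/(_ (wmax c cC')); rewrite ltnn.
Qed.

Lemma len_prefix v j : (0 < j <= len v)%N -> exists2 w, w <= v & len w = j.
Proof.
move=> /andP[j0 /subnK]; move: (len v - j)%N => n.
elim: n v => [|n IH] v lv; first by exists v; rewrite -?lv.
have [|w wv lw] := @len_pred v; first by lia.
have [|w' w'w <-] := IH w; first by lia.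
by exists w' => //; exact: le_trans w'w (ltW wv).
Qed.

End Length.

Section Minimals.
Variables (d : Order.disp_t) (T : finPOrderType d).
Local Open Scope order_scope.
Implicit Types (D : {set T}) (x y z : T).

(* Locked so that [inE] does not unfold membership in [minimals D]. *)
Fact minimals_key : unit. Proof. by []. Qed.
Definition minimals D : {set T} :=
  locked_with minimals_key [set y in D | [forall z in D, (z <= y) ==> (z == y)]].

Lemma minimalsP D y :
  reflect (y \in D /\ forall z, z \in D -> ~~ (z < y)) (y \in minimals D).
Proof.
rewrite /minimals locked_withE inE; apply: (iffP andP) => -[yD ymin]; split => //.
  move=> z zD; rewrite lt_neqAle; have := forall_inP ymin z zD.
  by case: (z <= y); rewrite ?andbF ?implyTb // => ->.
apply/forall_inP=> z zD; apply/implyP; rewrite le_eqVlt => /orP[//|zy].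
by have := ymin z zD; rewrite zy.
Qed.

Definition minimals_above D x : {set T} := [set m in minimals D | x < m].

Lemma upclosedP D : reflect (forall x y, x \in D -> x <= y -> y \in D) (upclosed D).
Proof.
apply: (iffP forall_inP) => [H x y /H /forallP /(_ y) /implyP //|H x xD].
by apply/forallP=> y; apply/implyP; apply: H.
Qed.

Section AddMinimal.
Variables (D : {set T}) (x : T).
Hypotheses (upD : upclosed D) (xD : x \notin D) (above_x : forall z, x < z -> z \in D).

Lemma upclosed_setU1 : upclosed (x |: D).
Proof.
apply/upclosedP=> a b /setU1P[->|aD] ab; last by rewrite setU1r // (upclosedP _ upD a).
by move: ab; rewrite le_eqVlt => /orP[/eqP<-|/above_x bD]; rewrite ?setU11 ?setU1r.
Qed.

Lemma minimals_setU1 : minimals (x |: D) = x |: (minimals D :\: [set m | x < m]).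
Proof.
apply/setP=> y; rewrite !inE; apply/minimalsP/idP.
  case=> /setU1P[->|yD] ymin; first by rewrite eqxx.
  rewrite ymin ?setU11 //=; apply/orP; right; apply/minimalsP.
  by split=> // z zD; apply: ymin; rewrite setU1r.
case/orP=> [/eqP->|/andP[xy /minimalsP[yD ymin]]]; split.
- exact: setU11.
- move=> z /setU1P[->|zD]; first by rewrite ltxx.
  by apply/negP=> /ltW zx; move: xD; rewrite (upclosedP _ upD z x zD zx).
- exact: setU1r.
- by move=> z /setU1P[->//|]; apply: ymin.
Qed.

Lemma card_minimals_setU1 :
  (#|minimals (x |: D)| + #|minimals_above D x| = #|minimals D| + 1)%N.
Proof.
have xmin : x \notin minimals D :\: [set m | x < m].
  by rewrite !inE ltxx; apply: contra xD => /minimalsP[].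
have -> : minimals_above D x = minimals D :&: [set m | x < m].
  by apply/setP=> m; rewrite !inE.
rewrite minimals_setU1 cardsU1 xmin cardsD.
by have := subset_leq_card (subsetIl (minimals D) [set m | x < m]); lia.
Qed.

End AddMinimal.

Definition card_minimals_determined := forall B D : {set T},
  upclosed B -> upclosed D -> #|B| = #|D| -> #|minimals B| = #|minimals D|.

Lemma card_minimals_above_eq D x y : card_minimals_determined ->
  upclosed D -> x \notin D -> (forall z, x < z -> z \in D) ->
  y \notin D -> (forall z, y < z -> z \in D) ->
  #|minimals_above D x| = #|minimals_above D y|.
Proof.
move=> detT upD xD above_x yD above_y.
have := card_minimals_setU1 upD xD; have := card_minimals_setU1 upD yD.
rewrite (detT (x |: D) (y |: D)) ?upclosed_setU1 ?cardsU1 ?xD ?yD //; lia.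
Qed.

End Minimals.

Section Hierarchical.
Variables (d : Order.disp_t) (T : finPOrderType d).
Local Open Scope order_scope.
Implicit Types (B D : {set T}) (x y z : T).

Lemma len_lt x y : x <= y -> (len x < len y)%N -> x < y.
Proof. by move=> xy lxy; rewrite lt_def xy andbT; apply: contraTneq lxy => ->; rewrite ltnn. Qed.

Definition upper_levels (l : nat) : {set T} := [set y | (l < len y)%N].

Lemma upclosed_upper_levels l : upclosed (upper_levels l).
Proof. by apply/upclosedP=> x y; rewrite !inE => lx /leq_len; apply: leq_trans. Qed.

Section Levels.
Hypothesis hierT : hierarchical T.

Lemma upper_levels_sub D z : upclosed D -> z \in D -> upper_levels (len z) \subset D.
Proof.
move=> upD zD; apply/subsetP=> y; rewrite inE => zy.
by apply: (upclosedP _ upD z) => //; apply: hierT; rewrite addn1.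
Qed.

Lemma minimals_hierarchical D z : upclosed D -> z \in D ->
  (forall y, y \in D -> (len z <= len y)%N) -> minimals D = D :\: upper_levels (len z).
Proof.
move=> upD zD zmin; apply/setP=> y; rewrite in_setD inE.
apply/minimalsP/andP => [[yD ymin]|[zy yD]]; split=> //.
  by apply: contra (ymin z zD) => zy; rewrite len_lt // hierT ?addn1.
by move=> x xD; apply/negP=> /ltn_len; have := zmin x xD; rewrite -leqNgt in zy; lia.
Qed.

Lemma card_upclosed_hierarchical D z : upclosed D -> z \in D ->
  (forall y, y \in D -> (len z <= len y)%N) ->
  #|D| = (#|upper_levels (len z)| + #|minimals D|)%N.
Proof.
move=> upD zD zmin; have sub := upper_levels_sub upD zD.
by rewrite (minimals_hierarchical upD zD zmin) cardsD (setIidPr sub) subnKC ?subset_leq_card.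
Qed.

Lemma card_upclosed_lt B D (zB zD : T) : upclosed B -> zB \in B ->
  (forall y, y \in D -> (len zD <= len y)%N) -> (len zB < len zD)%N -> (#|D| < #|B|)%N.
Proof.
move=> upB zBB zDmin lt_zBD.
have DU : D \subset upper_levels (len zB).
  by apply/subsetP=> y /zDmin; rewrite inE; apply: leq_trans.
have UB : upper_levels (len zB) \proper B.
  by rewrite properE upper_levels_sub //=; apply/subsetPn; exists zB; rewrite // inE ltnn.
exact: leq_ltn_trans (subset_leq_card DU) (proper_card UB).
Qed.

Lemma hierarchical_card_minimals_determined : card_minimals_determined T.
Proof.
have lowest D : D != set0 -> exists2 z, z \in D & forall y, y \in D -> (len z <= len y)%N.
  by case/set0Pn=> z0 z0D; have [z zD zmin] := arg_minnP (fun z => len z) z0D; exists z.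
move=> B D upB upD eqBD.
have [B0|/lowest[zB zBB zBmin]] := eqVneq B set0.
  by move: eqBD; rewrite B0 cards0 => /esym/eqP; rewrite cards_eq0 => /eqP->.
have [D0|/lowest[zD zDD zDmin]] := eqVneq D set0.
  by move: eqBD; rewrite D0 cards0 => /eqP; rewrite cards_eq0 => /eqP->.
have cardB := card_upclosed_hierarchical upB zBB zBmin.
have cardD := card_upclosed_hierarchical upD zDD zDmin.
case: (ltngtP (len zB) (len zD)) => [lt_BD|lt_DB|eq_BD].
- by have := card_upclosed_lt upB zBB zDmin lt_BD; rewrite eqBD ltnn.
- by have := card_upclosed_lt upD zDD zBmin lt_DB; rewrite eqBD ltnn.
- by move: cardB cardD; rewrite eq_BD eqBD => ->; lia.
Qed.

End Levels.

(* Downward induction on [len u]: a counterexample with maximal [len u] can be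
   moved, by [len_prefix], to the level just above [u]. *)
Lemma hierarchical_from_adjacent_levels :
  (forall u w : T, len w = (len u).+1 ->
     (forall x y, (len u < len x < len y)%N -> x <= y) -> u <= w) ->
  hierarchical T.
Proof.
move=> adjacent; pose bad (u : T) := [exists v, (len u < len v)%N && ~~ (u <= v)].
suff good (u : T) : ~~ bad u.
  move=> u v; rewrite addn1 => uv; apply: contraNT (good u) => nuv.
  by apply/existsP; exists v; rewrite uv.
apply/negP=> /(arg_maxnP (fun u => len u))[{}u /existsP[v /andP[uv nuv]] umax].
have [|w wv lw] := @len_prefix _ _ v (len u).+1; first by rewrite uv.
apply: (negP nuv); apply: le_trans wv; apply: adjacent lw _ => x y /andP[ux xy].
apply/contraT=> nxy; suff: (len x <= len u)%N by rewrite leqNgt ux.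
by apply: umax; apply/existsP; exists y; rewrite xy.
Qed.

Section AdjacentLevels.
Hypothesis detT : card_minimals_determined T.
Variables (u w : T).
Hypotheses (lw : len w = (len u).+1)
  (above : forall x y, (len u < len x < len y)%N -> x <= y).

Lemma minimals_above_transfer D x y m : upclosed D ->
  x \notin D -> (forall z, x < z -> z \in D) ->
  y \notin D -> (forall z, y < z -> z \in D) ->
  m \in minimals_above D x -> exists m', m' \in minimals_above D y.
Proof.
move=> upD xD above_x yD above_y mx; apply/card_gt0P.
by rewrite -(card_minimals_above_eq detT upD xD above_x yD above_y); apply/card_gt0P; exists m.
Qed.

Lemma exists_cover : [exists t, (len t == (len u).+1) && (u <= t)].
Proof.
apply/contraT; rewrite negb_exists => /forallP no_cover.
have [|w' w'w lw'] := @len_prefix _ _ w (len u); first by rewrite lw len_gt0 /=.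
pose D := upper_levels (len u).
have notD z : len z = len u -> z \notin D by move=> lz; rewrite inE lz ltnn.
have aboveD z : len z = len u -> forall y, z < y -> y \in D.
  by move=> lz y /ltn_len; rewrite inE lz.
have wD : w \in D by rewrite inE lw.
have [m] : exists m, m \in minimals_above D u.
  apply: (minimals_above_transfer (m := w) (upclosed_upper_levels _)
    (notD _ lw') (aboveD _ lw') (notD _ erefl) (aboveD _ erefl)).
  rewrite inE len_lt ?lw ?lw' // andbT; apply/minimalsP; split => // z; rewrite inE.
  by apply: contraL => /ltn_len; rewrite lw ltnS -leqNgt.
rewrite inE => /andP[/minimalsP[mD mmin] um].
move: mD; rewrite inE leq_eqVlt => /orP[/eqP lm|lm].
  by have := no_cover m; rewrite -lm eqxx (ltW um).
have lwm : (len w < len m)%N by rewrite lw.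
have wm : w <= m by apply: above; rewrite lwm lw ltnSn.
by have := mmin w wD; rewrite len_lt.
Qed.

Lemma le_cover t : len t = (len u).+1 -> u <= t -> u <= w.
Proof.
move=> lent ut; apply/contraT=> nuw.
pose D := [set z | ((len u).+1 < len z)%N || (len z == (len u).+1) && (u <= z)].
have upD : upclosed D.
  apply/upclosedP=> a b aD; rewrite le_eqVlt => /orP[/eqP<-//|/ltn_len ab].
  by move: aD; rewrite !inE => /orP[|/andP[/eqP la _]]; lia.
have uD : u \notin D by rewrite inE; apply/negP=> /orP[|/andP[/eqP]]; lia.
have above_u z : u < z -> z \in D.
  by move=> uz; rewrite inE (ltW uz) andbT; have := ltn_len uz; lia.
have wD : w \notin D by rewrite inE lw ltnn eqxx (negbTE nuw).
have above_w z : w < z -> z \in D by move=> /ltn_len; rewrite inE lw => ->.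
have tD : t \in D by rewrite inE lent eqxx ut orbT.
have [m] : exists m, m \in minimals_above D w.
  apply: (minimals_above_transfer (m := t) upD uD above_u wD above_w).
  rewrite inE len_lt ?lent // andbT; apply/minimalsP; split => // z.
  by rewrite inE => /orP[lz|/andP[/eqP lz _]]; apply/negP=> /ltn_len; lia.
rewrite inE => /andP[/minimalsP[_ mmin] /ltn_len wm].
have ltm : (len t < len m)%N by rewrite lent -lw.
have tm : t <= m by apply: above; rewrite ltm lent ltnSn.
by have := mmin t tD; rewrite len_lt.
Qed.

End AdjacentLevels.

Lemma card_minimals_determined_hierarchical :
  card_minimals_determined T -> hierarchical T.
Proof.
move=> detT; apply: hierarchical_from_adjacent_levels => u w lw above.
have /existsP[t /andP[/eqP lent ut]] := exists_cover detT lw above.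
exact: (le_cover detT lw above lent ut).
Qed.

Lemma hierarchical_card_minimalsP :
  hierarchical T <-> card_minimals_determined T.
Proof.
split; first exact: hierarchical_card_minimals_determined.
exact: card_minimals_determined_hierarchical.
Qed.

End Hierarchical.

Section LeadingTerm.
Variables (d : Order.disp_t) (T : finPOrderType d) (K : fieldType) (tau eta : T -> K).
Local Open Scope order_scope.
Implicit Types (D I : {set T}).

Definition lead_downset D : {set T} := ~: D :|: minimals D.

Lemma card_lead_downset D : #|lead_downset D| = (#|~: D| + #|minimals D|)%N.
Proof.
rewrite cardsU; suff -> : ~: D :&: minimals D = set0 by rewrite cards0 subn0.
apply/setP=> x; rewrite !inE.
by case: (boolP (x \in minimals D)) => [/minimalsP[->]|]; rewrite ?andbF.
Qed.

Lemma downclosed_lead_downset D : upclosed D -> downclosed_in setT (lead_downset D).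
Proof.
move=> upD; rewrite /downclosed_in subsetT; apply/forall_inP=> x xI.
apply/forall_inP=> y _; apply/implyP=> yx; move: xI; rewrite !inE.
case: (boolP (y \in D)) => //= yD; case: (boolP (x \in D)) => /= [xD /minimalsP[_ xmin]|xD].
  by apply/minimalsP; split=> // z zD; apply: contra (xmin z zD) => /lt_le_trans; apply.
by rewrite (upclosedP _ upD y x yD yx) in xD.
Qed.

(* A nonzero [phi D I] forbids any [x \in I :&: D] from lying strictly above
   another element of [D], since that element would also be in [I]. *)
Lemma phi_neq0_sub D I : downclosed_in setT I -> phi tau eta D I != 0%R ->
  I \subset lead_downset D.
Proof.
case/andP=> _ /forall_inP Idown; rewrite /phi.
case: ifP => [/subsetP IDmax _|]; last by rewrite eqxx.
apply/subsetP=> x xI; rewrite !inE; case: (boolP (x \in D)) => //= xD.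
apply/minimalsP; split=> // z zD; apply/negP=> zx.
have zI : z \in I by have /forall_inP/(_ z (in_setT z))/implyP := Idown x xI; apply; exact: ltW.
have /IDmax : z \in I :&: D by rewrite inE zI zD.
rewrite inE => /andP[_ /forall_inP/(_ x xI)/implyP/(_ (ltW zx))/eqP ezx].
by rewrite ezx ltxx in zx.
Qed.

Section NonzeroWeights.
Hypotheses (htau : forall i, tau i != 0%R) (heta : forall i, eta i != 0%R).

Lemma phi_lead_downset_neq0 D : upclosed D -> phi tau eta D (lead_downset D) != 0%R.
Proof.
move=> upD; rewrite /phi.
have -> : lead_downset D :&: D \subset maxset_of (lead_downset D).
  apply/subsetP=> x; rewrite !inE => /andP[/orP[xnD|xmin] xD]; first by rewrite xD in xnD.
  rewrite xD xmin /=; apply/forall_inP=> z zI; apply/implyP=> xz.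
  have zD := upclosedP _ upD x z xD xz.
  move: zI; rewrite !inE zD /= => /minimalsP[_ zmin].
  by have := zmin x xD; rewrite lt_def xz andbT negbK eq_sym.
by rewrite !mulf_neq0 ?expf_neq0 ?oppr_eq0 ?oner_eq0 //; apply/prodf_neq0.
Qed.

Lemma deg_pi_poly D : upclosed D ->
  deg (pi_poly tau eta setT D) = (#|~: D| + #|minimals D|)%N.
Proof.
move=> upD; rewrite /deg -card_lead_downset /pi_poly.
rewrite (bigD1 (lead_downset D)) ?downclosed_lead_downset //=.
rewrite size_polyDl size_scale ?phi_lead_downset_neq0 // ?size_polyXn //.
apply: leq_ltn_trans (size_sum _ _ _) _; rewrite ltnS; apply/bigmax_leqP=> I /andP[downI neqI].
have [->|phiI] := eqVneq (phi tau eta D I) 0%R; first by rewrite scale0r size_poly0.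
rewrite size_scale // size_polyXn; apply: proper_card.
by rewrite properEneq neqI phi_neq0_sub.
Qed.

End NonzeroWeights.
End LeadingTerm.

Theorem proposition3p2 (d : Order.disp_t) (T : finPOrderType d) (K : fieldType)
  (tau eta : T -> K)
  (htau : forall i, tau i != 0%R) (heta : forall i, eta i != 0%R) :
  hierarchical T <->
  (forall B D : {set T}, upclosed B -> upclosed D -> #|B| = #|D| ->
     deg (pi_poly tau eta setT B) = deg (pi_poly tau eta setT D)).
Proof.
rewrite hierarchical_card_minimalsP; split=> det B D upB upD eqBD.
  by rewrite !deg_pi_poly // (det B D) //; have := cardsC B; have := cardsC D; lia.
have := det B D upB upD eqBD; rewrite !deg_pi_poly //.
by have := cardsC B; have := cardsC D; lia.
Qed.
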